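(* Let $A^\star\in\mathbb{R}^{n\times n}$, $B^\star\in\mathbb{R}^{n\times m}$, $C^\star\in\mathbb{R}^{p\times n}$ with $(A^\star,C^\star)$ observable with observability index $\ell^\star$, let data be generated as in the context and assume $\Delta_{10}\Delta_{10}^\top\preceq\Theta$. Then: $\Psi_0\Psi_0^\top\succ\Theta_{22}$ implies $\operatorname{rank}S_0=(p+m)\ell^\star$; $\operatorname{rank}S_0=(p+m)\ell^\star$ implies $\operatorname{rank}\mathcal{O}_{\ell^\star}=p\ell^\star$; and $\operatorname{rank}\mathcal{O}_{\ell^\star}=p\ell^\star$ implies $p\ell^\star=n$.
   Context: Let $\ell=\ell^\star$; $\mathcal{O}_\ell=[C^\star;C^\star A^\star;\dots;C^\star{A^\star}^{\ell-1}]\in\mathbb{R}^{p\ell\times n}$. Data: for $k=0,\dots,T$ ($T\ge\ell$), $x(k+1)=A^\star x(k)+B^\star u(k)$, $y(k)=C^\star x(k)$ from some $x(0)$; $u^{\mathrm m}=u+d^u$, $y^{\mathrm m}=y+d^y$. Matrices with columns $j=0,\dots,T-\ell$: column $j$ of $\Psi_0$ is $(y^{\mathrm m}(j),\dots,y^{\mathrm m}(j+\ell-1),u^{\mathrm m}(j),\dots,u^{\mathrm m}(j+\ell-1))$; of $S_0$ is $(y(j),\dots,y(j+\ell-1),u(j),\dots,u(j+\ell-1))$ (noise-free data); of $\Delta_{10}$ is $(d^y(j+\ell),d^y(j),\dots,d^y(j+\ell-1),d^u(j),\dots,d^u(j+\ell-1))$. $\Theta=\Theta^\top\succeq0$ of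 size $p+p\ell+m\ell$ is given, partitioned as $\begin{bmatrix}\Theta_{11}&\Theta_{12}\\\Theta_{12}^\top&\Theta_{22}\end{bmatrix}$ with $\Theta_{11}\in\mathbb{R}^{p\times p}$. *)

From HB Require Import structures.
From mathcomp Require Import all_boot all_order all_algebra.
Set Implicit Arguments. Unset Strict Implicit. Unset Printing Implicit Defensive.
Import Order.TTheory GRing.Theory Num.Theory.
Local Open Scope ring_scope.

(* Positive semidefiniteness / definiteness of a square real matrix via the
   quadratic form (the paper uses these for symmetric matrices). *)
Definition psdmx (R : realFieldType) (k : nat) (M : 'M[R]_k) : Prop :=
  forall v : 'cV[R]_k, 0 <= (v^T *m M *m v) 0 0.
Definition pdmx (R : realFieldType) (k : nat) (M : 'M[R]_k) : Prop :=
  forall v : 'cV[R]_k, v != 0 -> 0 < (v^T *m M *m v) 0 0.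
Definition loewner_le (R : realFieldType) (k : nat) (X Y : 'M[R]_k) : Prop :=
  psdmx (Y - X).
Definition loewner_gt (R : realFieldType) (k : nat) (X Y : 'M[R]_k) : Prop :=
  pdmx (X - Y).

Definition obsmx (R : realFieldType) (n p : nat) (A : 'M[R]_n) (C : 'M[R]_(p, n))
  (l : nat) : 'M[R]_(\sum_(i < l) p, n) :=
  @mxcol R l (fun _ => p) n (fun i => C *m A ^+ i).

Definition observable (R : realFieldType) (n p : nat) (A : 'M[R]_n) (C : 'M[R]_(p, n)) :=
  \rank (obsmx A C n) = n.

Definition obs_index (R : realFieldType) (n p : nat) (A : 'M[R]_n) (C : 'M[R]_(p, n))
  (l : nat) :=
  \rank (obsmx A C l) = n /\ (forall k, (k < l)%N -> (\rank (obsmx A C k) < n)%N).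

Definition hankel (R : realFieldType) (d : nat) (w : nat -> 'cV[R]_d) (l N : nat)
  : 'M[R]_(\sum_(k < l) d, N) :=
  @mxcol R l (fun _ => d) N (fun k => \matrix_(r < d, j < N) w (j + k)%N r 0).

From HB Require Import structures.
From mathcomp Require Import all_boot all_order all_algebra.
From mathcomp Require Import zify lra.
Import Order.TTheory GRing.Theory Num.Theory.
Local Open Scope ring_scope.

(* A nonzero w with w S0 = 0 sees only noise: w Psi0 = [0 w] Delta10, so
   w Psi0 Psi0^T w^T <= w Theta22 w^T, contradicting Psi0 Psi0^T > Theta22;
   hence S0 has full row rank.  Iterating the state equation, every block row of
   S0 lies in the row space of [x(0) ... x(N-1)] stacked on the input Hankel
   matrix, so (p + m) l = rank S0 <= n + m l.  Together with
   n = rank O_l <= p l this gives p l = n. *)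

Section BlockSubspaces.
Context {F : fieldType}.

Lemma submx_col_mxl {a b c} (X : 'M[F]_(a, c)) (Y : 'M[F]_(b, c)) :
  (X <= col_mx X Y)%MS.
Proof. by rewrite -addsmxE addsmxSl. Qed.

Lemma submx_col_mxr {a b c} (X : 'M[F]_(a, c)) (Y : 'M[F]_(b, c)) :
  (Y <= col_mx X Y)%MS.
Proof. by rewrite -addsmxE addsmxSr. Qed.

Lemma submx_mxcol {k} {p_ : 'I_k -> nat} {c} (B_ : forall i, 'M[F]_(p_ i, c)) i :
  (B_ i <= \mxcol_i B_ i)%MS.
Proof. by rewrite -[X in (X <= _)%MS](mxcolK B_ i) /submxcol rowsubE submxMl. Qed.

Lemma mxcol_sub {k} {p_ : 'I_k -> nat} {c r} (B_ : forall i, 'M[F]_(p_ i, c))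
    (S : 'M[F]_(r, c)) :
  (forall i, (B_ i <= S)%MS) -> (\mxcol_i B_ i <= S)%MS.
Proof.
move=> BS; apply/row_subP => i; rewrite row_mxcol.
exact: submx_trans (row_sub _ _) (BS _).
Qed.

End BlockSubspaces.

Section QuadraticForms.
Context {R : realFieldType}.

Lemma psdmx_row {k} {M : 'M[R]_k} (w : 'rV[R]_k) :
  psdmx M -> 0 <= (w *m M *m w^T) 0 0.
Proof. by move=> /(_ w^T); rewrite trmxK. Qed.

Lemma pdmx_row {k} {M : 'M[R]_k} {w : 'rV[R]_k} :
  pdmx M -> w != 0 -> 0 < (w *m M *m w^T) 0 0.
Proof. by move=> M_pd w0; have := M_pd w^T; rewrite trmxK trmx_eq0; apply; exact: w0. Qed.

Lemma quad_formB k (X Y : 'M[R]_k) (w : 'rV[R]_k) :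
  (w *m (X - Y) *m w^T) 0 0 = (w *m X *m w^T) 0 0 - (w *m Y *m w^T) 0 0.
Proof. by rewrite mulmxBr mulmxBl !mxE. Qed.

Lemma quad_form_gram a b (M : 'M[R]_(a, b)) (w : 'rV[R]_a) :
  w *m (M *m M^T) *m w^T = (w *m M) *m (w *m M)^T.
Proof. by rewrite trmx_mul !mulmxA. Qed.

Lemma quad_form_row0_mx a b (M : 'M[R]_(a + b)) (w : 'rV[R]_b) :
  row_mx 0 w *m M *m (row_mx 0 w)^T = w *m drsubmx M *m w^T.
Proof.
rewrite -[M in LHS]submxK tr_row_mx trmx0 mul_row_block !mul0mx !add0r.
by rewrite mul_row_col mulmx0 add0r.
Qed.

Lemma row_free_of_gram_domination {q r N} {S D : 'M[R]_(r, N)}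
    {E : 'M[R]_(q, N)} {Theta : 'M[R]_(q + r)} :
  loewner_le (col_mx E D *m (col_mx E D)^T) Theta ->
  loewner_gt ((S + D) *m (S + D)^T) (drsubmx Theta) -> row_free S.
Proof.
move=> le_ED gt_SD; apply/negPn/negP => S_not_free.
have /rowV0Pn[w /sub_kermxP wS w0] : kermx S != 0 by rewrite kermx_eq0.
have := pdmx_row gt_SD w0; have := psdmx_row (row_mx 0 w) le_ED.
rewrite !quad_formB quad_form_row0_mx !quad_form_gram.
rewrite mul_row_col mul0mx add0r mulmxDr wS add0r.
lra.
Qed.

End QuadraticForms.

Section DataMatrices.
Context {R : realFieldType}.

Definition sample_mx {d} (w : nat -> 'cV[R]_d) (k N : nat) : 'M[R]_(d, N) :=
  \matrix_(r, j) w (j + k)%N r 0.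

Lemma hankelE d (w : nat -> 'cV[R]_d) l N :
  hankel w l N = \mxcol_(k < l) sample_mx w k N.
Proof. by []. Qed.

Lemma eq_sample_mx d (v w : nat -> 'cV[R]_d) k N :
  (forall j, (j < N)%N -> v (j + k)%N = w (j + k)%N) ->
  sample_mx v k N = sample_mx w k N.
Proof. by move=> vw; apply/matrixP => r j; rewrite !mxE vw. Qed.

Lemma sample_mxD d (v w : nat -> 'cV[R]_d) k N :
  sample_mx (fun t => v t + w t) k N = sample_mx v k N + sample_mx w k N.
Proof. by apply/matrixP => r j; rewrite !mxE. Qed.

Lemma sample_mxMl e d (M : 'M[R]_(e, d)) (w : nat -> 'cV[R]_d) k N :
  sample_mx (fun t => M *m w t) k N = M *m sample_mx w k N.
Proof.
by apply/matrixP => r j; rewrite !mxE; apply: eq_bigr => i _; rewrite !mxE.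
Qed.

Lemma sample_mxS d (w : nat -> 'cV[R]_d) k N :
  sample_mx w k.+1 N = sample_mx (fun t => w t.+1) k N.
Proof. by apply/matrixP => r j; rewrite !mxE addnS. Qed.

Lemma hankelD d (v w : nat -> 'cV[R]_d) l N :
  hankel (fun t => v t + w t) l N = hankel v l N + hankel w l N.
Proof. by rewrite !hankelE -mxcolD; apply: eq_mxcol => k; apply: sample_mxD. Qed.

End DataMatrices.

Section LinearSystemData.
Context {R : realFieldType} {n m p : nat}.
Context {A : 'M[R]_n} {B : 'M[R]_(n, m)} {C : 'M[R]_(p, n)}.
Context {x : nat -> 'cV[R]_n} {u : nat -> 'cV[R]_m} {y : nat -> 'cV[R]_p}.
Context {T l N : nat}.
Hypothesis state_eq : forall k, (k <= T)%N -> x k.+1 = A *m x k + B *m u k.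
Hypothesis output_eq : forall k, (k <= T)%N -> y k = C *m x k.
Hypothesis horizon : (l + N <= T.+1)%N.

Let state_input := col_mx (sample_mx x 0 N) (hankel u l N).

Lemma sample_input_sub {k} : (k < l)%N -> (sample_mx u k N <= state_input)%MS.
Proof.
move=> lt_kl; apply: submx_trans _ (submx_col_mxr (sample_mx x 0 N) _).
by rewrite hankelE (submx_mxcol (fun k : 'I_l => sample_mx u k N) (Ordinal lt_kl)).
Qed.

Lemma sample_state_sub {k} : (k < l)%N -> (sample_mx x k N <= state_input)%MS.
Proof.
elim: k => [|k IHk] lt_kl; first exact: submx_col_mxl.
have lt_kl' := ltnW lt_kl.
have -> : sample_mx x k.+1 N = A *m sample_mx x k N + B *m sample_mx u k N.
  rewrite sample_mxS -!sample_mxMl -sample_mxD.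
  by apply: eq_sample_mx => j lt_jN; apply: state_eq; lia.
rewrite addmx_sub //.
- exact: submx_trans (submxMl _ _) (IHk lt_kl').
- exact: submx_trans (submxMl _ _) (sample_input_sub lt_kl').
Qed.

Lemma io_data_sub : (col_mx (hankel y l N) (hankel u l N) <= state_input)%MS.
Proof.
rewrite col_mx_sub submx_col_mxr andbT hankelE; apply: mxcol_sub => k.
have lt_kl := ltn_ord k.
have -> : sample_mx y k N = C *m sample_mx x k N.
  by rewrite -sample_mxMl; apply: eq_sample_mx => j lt_jN; apply: output_eq; lia.
exact: submx_trans (submxMl _ _) (sample_state_sub lt_kl).
Qed.

Lemma rank_io_data_le :
  (\rank (col_mx (hankel y l N) (hankel u l N)) <= n + m * l)%N.
Proof.
apply: leq_trans (mxrankS io_data_sub) (leq_trans (rank_leq_row _) _).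
by rewrite sum_nat_const card_ord mulnC.
Qed.

End LinearSystemData.

Theorem lemma9 (R : realFieldType) (n m p : nat)
  (A : 'M[R]_n) (B : 'M[R]_(n, m)) (C : 'M[R]_(p, n))
  (l : nat) (T : nat)
  (x : nat -> 'cV[R]_n) (u du : nat -> 'cV[R]_m) (y dy : nat -> 'cV[R]_p)
  (Theta : 'M[R]_(p + (\sum_(k < l) p + \sum_(k < l) m)))
  (Hobs : observable A C)
  (Hl : obs_index A C l)
  (HlT : (l <= T)%N)
  (Hx : forall k, (k <= T)%N -> x k.+1 = A *m x k + B *m u k)
  (Hy : forall k, (k <= T)%N -> y k = C *m x k)
  (HThsym : Theta^T = Theta)
  (HThpsd : psdmx Theta) :
  let N := (T - l).+1 in
  let Psi0 := col_mx (hankel (fun k => y k + dy k) l N)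
                     (hankel (fun k => u k + du k) l N) in
  let S0 := col_mx (hankel y l N) (hankel u l N) in
  let Delta10 := col_mx (\matrix_(r < p, j < N) dy (j + l)%N r 0)
                        (col_mx (hankel dy l N) (hankel du l N)) in
  let Theta22 := drsubmx (Theta : 'M_(p + _, p + _)) in
  loewner_le (Delta10 *m Delta10^T) Theta ->
  (loewner_gt (Psi0 *m Psi0^T) Theta22 -> \rank S0 = ((p + m) * l)%N) /\
  (\rank S0 = ((p + m) * l)%N -> \rank (obsmx A C l) = (p * l)%N) /\
  (\rank (obsmx A C l) = (p * l)%N -> (p * l)%N = n).
Proof.
move=> N Psi0 S0 Delta10 Theta22 le_Delta.
have [rank_obs _] := Hl.
have sum_l k : (\sum_(i < l) k)%N = (k * l)%N by rewrite sum_nat_const card_ord mulnC.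
split; [|split]; last by move=> <-.
- rewrite /Psi0 !hankelD -add_col_mx => gt_Psi.
  have /eqP -> := row_free_of_gram_domination le_Delta gt_Psi.
  by rewrite !sum_l mulnDl.
- move=> rank_S0.
  have horizon : (l + N <= T.+1)%N by rewrite /N; lia.
  have := rank_io_data_le Hx Hy horizon; rewrite rank_S0.
  have := rank_leq_row (obsmx A C l); rewrite rank_obs sum_l.
  lia.
Qed.
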